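(* Let $u$ be a drift function, $p\in[1,\infty)$, and $\mu$ a finite non-zero $P$-invariant measure on $\mathbf X$. Then $\mathcal E^p_u(\mathbf X)\subset\mathcal L^p(\mathbf X,\mu)$ and the inclusion map is continuous.
   Context: $(X_n)$ Markov chain on a complete separable metric space $\mathbf X$, $\mathbb P_x$ its law from $x$, $Pf(x)=\mathbb E_xf(X_1)$; $\mu$ is $P$-invariant if $\int Pf\,d\mu=\int f\,d\mu$ for non-negative Borel $f$. $\tau$ is a $\theta$-compatible stopping time ($\mathbb P_x(\tau=0)=0$ and $\mathbb P_x$-a.s. $\tau\ge2\Rightarrow\tau\circ\theta=\tau-1$) with $\mathbb E_x\tau<\infty$ for all $x$; $Qf(x)=\mathbb E_x[f(X_\tau)\mathbf 1_{\tau<\infty}]$. A drift function is a Borel $u:\mathbf X\to[1,\infty)$ such that $u-Pu$ is bounded below and $Qu$, $x\mapsto\mathbb E_x\tau/u(x)$ and $P(u-Pu+B_u)/(u-Pu+B_u)$ are bounded on $\mathbf X$, where $B_u=\sup(Pu-u)+1$. For Borel $v\ge1$, $\mathcal F^p_v$ is the space of Borel $f$ with $\sup|f|^p/v<\infty$, norm $\sup|f|/v^{1/p}$; $\mathcal E^p_u:=\mathcal F^p_{u-Pu+B_u}$. *)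

From HB Require Import structures.
From mathcomp Require Import all_boot all_order all_algebra.
From mathcomp Require Import all_classical all_reals all_analysis measurable_realfun.
Set Implicit Arguments. Unset Strict Implicit. Unset Printing Implicit Defensive.
Import Order.TTheory GRing.Theory Num.Theory.
Import numFieldNormedType.Exports.
Local Open Scope classical_set_scope.
Local Open Scope ring_scope.

(* The state space: a complete (pseudo)metric space T, which is Hausdorff
   (hence a genuine metric space) and separable; it is equipped with its
   Borel sigma-algebra, i.e. the sigma-algebra generated by the open sets. *)
Definition polish_space {R : realType} (T : completePseudoMetricType R) : Prop :=
  hausdorff_space T /\ exists D : set T, countable D /\ dense D.

Notation Borel T := (g_sigma_algebraType (@open T)).

Section chain.
Context {R : realType} {d dO : measure_display}
  {X : measurableType d} {Omega : measurableType dO}.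
Variables (Px : X -> probability Omega R) (Xn : nat -> Omega -> X).

Local Open Scope ereal_scope.

Definition Pop (f : X -> \bar R) (x : X) : \bar R := \int[Px x]_w f (Xn 1 w).

Fixpoint iterP (fs : nat -> X -> \bar R) (k m : nat) : X -> \bar R :=
  match m with
  | 0 => fs k
  | m'.+1 => fun x => fs k x * Pop (iterP fs k.+1 m') x
  end.

(* (P_x)_x is the family of laws of a time-homogeneous Markov chain (X_n)
   started at x with transition kernel P (Pf(x) = E_x f(X_1)):
   x |-> P_x(A) is measurable, and finite-dimensional distributions are
   E_x[f_0(X_0)...f_n(X_n)] = f_0 P(f_1 P( ... P f_n))(x). *)
Definition is_markov_family : Prop :=
  (forall n, measurable_fun setT (Xn n)) /\
  (forall A : set Omega, measurable A -> measurable_fun setT (fun x => Px x A)) /\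
  (forall (fs : nat -> X -> \bar R) (n : nat) (x : X),
     (forall i, measurable_fun setT (fs i)) ->
     (forall i y, 0 <= fs i y) ->
     \int[Px x]_w (\prod_(i < n.+1) fs i (Xn i w)) = iterP fs 0 n x).

Definition is_shift (theta : Omega -> Omega) : Prop :=
  measurable_fun setT theta /\ forall n w, Xn n (theta w) = Xn n.+1 w.

Definition nat_filtration (n : nat) : set (set Omega) :=
  <<s \bigcup_(k in [set k | (k <= n)%N]) preimage_set_system setT (Xn k) measurable >>.

(* random times with values in N u {oo}; None stands for oo *)
Definition is_stopping_time (tau : Omega -> option nat) : Prop :=
  forall n, nat_filtration n [set w | tau w = Some n].

Definition theta_compatible (theta : Omega -> Omega) (tau : Omega -> option nat) : Prop :=
  forall x, Px x [set w | tau w = Some 0%N] = 0 /\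
    {ae Px x, forall w,
      (if tau w is Some n then (2 <= n)%N else true) ->
      tau (theta w) = omap predn (tau w)}.

Definition tauE (tau : Omega -> option nat) (w : Omega) : \bar R :=
  if tau w is Some n then (n%:R)%:E else +oo.

Definition Qop (tau : Omega -> option nat) (f : X -> \bar R) (x : X) : \bar R :=
  \int[Px x]_w (if tau w is Some n then f (Xn n w) else 0).

Definition Bu (u : X -> R) : \bar R :=
  ereal_sup [set Pop (EFin \o u) x - (u x)%:E | x in setT] + 1.

(* u - Pu + B_u (extended-real valued; finite for a drift function) *)
Definition wu (u : X -> R) (x : X) : \bar R := (u x)%:E - Pop (EFin \o u) x + Bu u.

(* its real-valued version (equal to wu when wu is finite) *)
Definition vu (u : X -> R) (x : X) : R := fine (wu u x).

Definition drift_function (tau : Omega -> option nat) (u : X -> R) : Prop :=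
  measurable_fun setT u /\ (forall x, (1 <= u x)%R) /\
  (exists c : R, forall x, c%:E <= (u x)%:E - Pop (EFin \o u) x) /\
  (* Qu bounded (it is nonnegative) *)
  (exists M : R, forall x, Qop tau (EFin \o u) x <= M%:E) /\
  (* x |-> E_x tau / u(x) bounded (it is nonnegative) *)
  (exists M : R, forall x, \int[Px x]_w tauE tau w <= M%:E * (u x)%:E) /\
  (* P(u - Pu + B_u) / (u - Pu + B_u) bounded (it is nonnegative) *)
  (exists M : R, forall x, Pop (wu u) x <= M%:E * wu u x).

Definition is_invariant (mu : {measure set X -> \bar R}) : Prop :=
  forall f : X -> \bar R, measurable_fun setT f -> (forall x, 0 <= f x) ->
    \int[mu]_x Pop f x = \int[mu]_x f x.

Definition in_Fp (v : X -> R) (p : R) (f : X -> R) : Prop :=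
  measurable_fun setT f /\ exists M : R, forall x, (`|f x| `^ p <= M * v x)%R.

Definition Fp_norm (v : X -> R) (p : R) (f : X -> R) : \bar R :=
  ereal_sup [set (`|f x| / v x `^ p^-1)%:E | x in setT].

Definition in_Ep (u : X -> R) (p : R) (f : X -> R) : Prop := in_Fp (vu u) p f.
Definition Ep_norm (u : X -> R) (p : R) (f : X -> R) : \bar R := Fp_norm (vu u) p f.

End chain.

From HB Require Import structures.
From mathcomp Require Import all_boot all_order all_algebra.
From mathcomp Require Import all_classical all_reals all_analysis measurable_realfun.
From mathcomp Require Import ring lra.
Import Order.TTheory GRing.Theory Num.Theory.
Import numFieldNormedType.Exports.
Local Open Scope classical_set_scope.
Local Open Scope ring_scope.

(* The weight w := u - Pu + B_u is at least 1, and P-invariance of mu bounds its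
   integral: for the truncations u_n := min(u, n), invariance gives exactly
   \int (u_n - P u_n + K) dmu = K mu(X), where K := max(B_u, 0) makes every integrand
   nonnegative, and Fatou's lemma lets n -> oo, so \int w dmu <= K mu(X).
   Then |f|^p <= M w yields \int |f|^p dmu <= M \int w dmu, i.e. the inclusion
   E^p_u into L^p(mu) with constant (\int w dmu)^(1/p). *)

Lemma measurable_fun_limn_einf {d} {T : measurableType d} {R : realType}
    (D : set T) (f : (T -> \bar R)^nat) :
  (forall n, measurable_fun D (f n)) ->
  measurable_fun D (fun x => limn_einf (f ^~ x)).
Proof.
move=> mf; apply: measurableT_comp => //.
by apply: measurable_fun_limn_esup => n; exact: measurableT_comp (mf n).
Qed.

Section weighted_Lp_bound.
Context {d} {T : measurableType d} {R : realType}.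
Variables (mu : {measure set T -> \bar R}) (v : T -> R) (A p : R).
Hypotheses (mv : measurable_fun setT v) (v_gt0 : forall x, 0 < v x)
  (int_v_le : (\int[mu]_x (v x)%:E <= A%:E)%E) (p_gt0 : 0 < p).

Lemma Lnorm_le_weight (f : T -> R) (M : R) :
  measurable_fun setT f -> 0 <= M -> (forall x, `|f x| `^ p <= M * v x) ->
  ('N[mu]_(p%:E)[EFin \o f] <= ((M * A) `^ p^-1)%:E)%E.
Proof.
move=> mf M0 fM.
have v0 x : 0 <= v x by exact/ltW.
set I := (\int[mu]_x (`|f x| `^ p)%:E)%E.
have I_le : (I <= (M * A)%:E)%E.
  apply: (@le_trans _ _ (\int[mu]_x (M * v x)%:E)%E).
    apply: ge0_le_integral => //.
    - apply/measurable_EFinP/(measurableT_comp (measurable_powR p)).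
      exact: measurableT_comp (@normr_measurable R setT) mf.
    - exact/measurable_EFinP/measurable_funM.
    - by move=> x ?; rewrite lee_fin.
  under eq_integral do rewrite EFinM.
  rewrite ge0_integralZl_EFin//; last 2 first.
  - by move=> x ?; rewrite lee_fin.
  - exact/measurable_EFinP.
  by rewrite EFinM lee_pmul// integral_ge0// => x _; rewrite lee_fin.
have I0 : (0 <= I)%E by apply: integral_ge0 => x _; rewrite lee_fin powR_ge0.
have I_fin : I \is a fin_num by rewrite ge0_fin_numE// (le_lt_trans I_le) ?ltry.
rewrite unlock /= -/I -(fineK I_fin) poweR_EFin lee_fin ge0_ler_powR//.
- by rewrite invr_ge0 ltW.
- by rewrite nnegrE fine_ge0.
- by rewrite nnegrE -lee_fin (le_trans I0 I_le).
- by rewrite -lee_fin fineK.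
Qed.

Lemma Fp_subset_Lfun (f : T -> R) : in_Fp v p f -> f \in Lfun mu p%:E.
Proof.
move=> [mf [M fM]]; rewrite inE; apply/andP; split; first by rewrite inE.
rewrite inE /= /finite_norm; apply: le_lt_trans (ltry ((Num.max M 0 * A) `^ p^-1)).
apply: Lnorm_le_weight _ _ mf _ _ => [|x]; first by rewrite le_max lexx orbT.
by apply: le_trans (fM x) _; rewrite ler_wpM2r ?le_max ?lexx// ltW.
Qed.

Lemma Lnorm_le_Fp_norm (f : T -> R) : [set: T] !=set0 -> 0 < A ->
  in_Fp v p f -> ('N[mu]_(p%:E)[EFin \o f] <= (A `^ p^-1)%:E * Fp_norm v p f)%E.
Proof.
move=> [x0 _] A_gt0 [mf _].
have le_norm x : ((`|f x| / v x `^ p^-1)%:E <= Fp_norm v p f)%E.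
  by apply: ereal_sup_ubound; exists x.
have norm_ge0 : (0 <= Fp_norm v p f)%E.
  by apply: le_trans (le_norm x0); rewrite lee_fin divr_ge0// powR_ge0.
case: (Fp_norm v p f) le_norm norm_ge0 => [N| |] le_norm // N0; last first.
  by rewrite muleC gt0_mulye ?leey// lte_fin powR_gt0.
have fN x : `|f x| `^ p <= N `^ p * v x.
  have vp_gt0 : 0 < v x `^ p^-1 by rewrite powR_gt0.
  have f_le : `|f x| <= N * v x `^ p^-1.
    by rewrite -ler_pdivrMr//; have := le_norm x; rewrite lee_fin.
  have -> : v x = (v x `^ p^-1) `^ p.
    by rewrite -powRrM mulVf ?gt_eqF// powRr1// ltW.
  rewrite -powRM ?powR_ge0//.
  by apply: ge0_ler_powR; rewrite ?nnegrE ?(ltW p_gt0) ?mulr_ge0 ?powR_ge0.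
apply: le_trans (Lnorm_le_weight _ _ mf (powR_ge0 _ _) fN) _.
rewrite -EFinM lee_fin powRM ?powR_ge0 ?(ltW A_gt0)// -powRrM mulfV ?gt_eqF//.
by rewrite powRr1 // mulrC.
Qed.
End weighted_Lp_bound.

Section transition_operator.
Context {R : realType} {d dO : measure_display}
  {X : measurableType d} {Omega : measurableType dO}.
Context {Px : X -> probability Omega R} {Xn : nat -> Omega -> X}.
Hypothesis markov : is_markov_family Px Xn.
Local Open Scope ereal_scope.

Lemma measurable_Pop (f : X -> \bar R) :
  measurable_fun setT f -> (forall x, 0 <= f x) ->
  measurable_fun setT (Pop Px Xn f).
Proof.
move: markov => [mX [mP _]] mf f0.
apply: (@measurable_fun_integral_kernel _ _ X Omega R (fun x => Px x)) => //.
exact: measurableT_comp.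
Qed.

Lemma Pop_ge0 (f : X -> \bar R) x : (forall x, 0 <= f x) -> 0 <= Pop Px Xn f x.
Proof. by move=> f0; apply: integral_ge0 => w _. Qed.

Lemma le_Pop (f g : X -> \bar R) x :
  measurable_fun setT f -> measurable_fun setT g ->
  (forall x, 0 <= f x) -> (forall x, f x <= g x) ->
  Pop Px Xn f x <= Pop Px Xn g x.
Proof.
move: markov => [mX _] mf mg f0 fg.
by apply: ge0_le_integral => //; exact: measurableT_comp.
Qed.

Lemma Pop_cst (r : R) x : Pop Px Xn (cst r%:E) x = r%:E.
Proof. by rewrite /Pop integral_cst//= probability_setT mule1. Qed.

Lemma measurable_fine_Pop (f pf : X -> R) :
  measurable_fun setT f -> (forall x, (0 <= f x)%R) ->
  (forall x, Pop Px Xn (EFin \o f) x = (pf x)%:E) -> measurable_fun setT pf.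
Proof.
move=> mf f0 Pf; rewrite (_ : pf = fine \o Pop Px Xn (EFin \o f)); last first.
  by apply/funext => x /=; rewrite Pf.
apply: measurableT_comp (fine_measurable measurableT) (measurable_Pop _ _ _).
- exact/measurable_EFinP.
- by move=> x; rewrite lee_fin.
Qed.

Section invariant_measure.
Context {mu : {measure set X -> \bar R}} {m : R}.
Hypotheses (mu_invariant : is_invariant Px Xn mu) (muE : mu setT = m%:E).

Lemma integral_sub_Pop_bounded (f pf : X -> R) (b K : R) :
  (0 <= K)%R -> measurable_fun setT f -> (forall x, (0 <= f x <= b)%R) ->
  (forall x, Pop Px Xn (EFin \o f) x = (pf x)%:E) ->
  (forall x, (0 <= f x - pf x + K)%R) ->
  \int[mu]_x (f x - pf x + K)%:E = (K * m)%:E.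
Proof.
move=> K0 mf fb Pf g0.
have f0 x : 0 <= (EFin \o f) x by rewrite lee_fin; case/andP: (fb x).
have pf0 x : 0 <= (pf x)%:E by rewrite -Pf Pop_ge0.
have mEf : measurable_fun setT (EFin \o f) by exact/measurable_EFinP.
have mpf : measurable_fun setT pf.
  by apply: measurable_fine_Pop mf _ Pf => x; case/andP: (fb x).
have If_fin : \int[mu]_x (f x)%:E \is a fin_num.
  rewrite ge0_fin_numE; last by apply: integral_ge0 => x _; exact: f0.
  apply: (@le_lt_trans _ _ (\int[mu]_x (cst b%:E x))); last first.
    by rewrite integral_cst// muE ltry.
  apply: ge0_le_integral => // x _; rewrite lee_fin; by case/andP: (fb x).
have Ipf : \int[mu]_x (pf x)%:E = \int[mu]_x (f x)%:E.
  rewrite -[RHS]mu_invariant //; apply: eq_integral => x _; by rewrite Pf.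
have split_f : \int[mu]_x (f x)%:E + (K * m)%:E =
    \int[mu]_x (f x - pf x + K)%:E + \int[mu]_x (pf x)%:E.
  rewrite EFinM -muE -integral_cst// -!ge0_integralD//.
  - by apply: eq_integral => x _; rewrite -!EFinD; congr EFin; ring.
  all: try by move=> x _; rewrite lee_fin.
  - by move=> x _; apply: f0.
  - exact/measurable_EFinP/measurable_funD/measurable_cst/measurable_funB.
  - exact/measurable_EFinP.
move: split_f; rewrite Ipf => /(congr1 (fun z => z - \int[mu]_x (f x)%:E)).
by rewrite addeC !addeK// => ->.
Qed.

Lemma integral_sub_Pop_le (f pf : X -> R) (K : R) :
  (0 <= K)%R -> measurable_fun setT f -> (forall x, (0 <= f x)%R) ->
  (forall x, Pop Px Xn (EFin \o f) x = (pf x)%:E) ->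
  (forall x, (0 <= f x - pf x + K)%R) ->
  \int[mu]_x (f x - pf x + K)%:E <= (K * m)%:E.
Proof.
move=> K0 mf f0 Pf h0.
pose fn n x := Num.min (f x) n%:R.
pose pfn n x := fine (Pop Px Xn (EFin \o fn n) x).
pose g n x := (fn n x - pfn n x + K)%:E.
have mfn n : measurable_fun setT (fn n).
  by apply: measurable_minr => //; exact: measurable_cst.
have fn_le_f n x : (fn n x <= f x)%R by rewrite ge_min lexx.
have fn_bounds n x : (0 <= fn n x <= n%:R)%R.
  by rewrite le_min f0 ler0n ge_min lexx orbT.
have Pfn_le n x : Pop Px Xn (EFin \o fn n) x <= n%:R%:E.
  rewrite -(Pop_cst n%:R x); apply: le_Pop.
  - exact/measurable_EFinP.
  - exact: measurable_cst.
  - by move=> y; rewrite lee_fin; case/andP: (fn_bounds n y).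
  - by move=> y; rewrite lee_fin; case/andP: (fn_bounds n y).
have Pfn_le_Pf n x : Pop Px Xn (EFin \o fn n) x <= (pf x)%:E.
  rewrite -Pf; apply: le_Pop.
  - exact/measurable_EFinP.
  - exact/measurable_EFinP.
  - by move=> y; rewrite lee_fin; case/andP: (fn_bounds n y).
  - by move=> y; rewrite lee_fin.
have Pfn n x : Pop Px Xn (EFin \o fn n) x = (pfn n x)%:E.
  rewrite fineK// ge0_fin_numE ?(le_lt_trans (Pfn_le n x)) ?ltry// Pop_ge0// => y.
  by rewrite lee_fin; case/andP: (fn_bounds n y).
have pfn_le n x : (pfn n x <= Num.min (pf x) n%:R)%R.
  by rewrite le_min -!lee_fin -Pfn Pfn_le Pfn_le_Pf.
have g0 n x : 0 <= g n x.
  rewrite lee_fin /fn; move: (pfn_le n x) (h0 x); rewrite le_min => /andP[].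
  by case: (leP (f x) n%:R) => [fx|/ltW nf]; rewrite ?(min_l fx) ?(min_r nf); lra.
have mg n : measurable_fun setT (g n).
  apply/measurable_EFinP/measurable_funD/measurable_cst/measurable_funB => //.
  apply: measurable_fine_Pop (mfn n) _ (Pfn n) => x.
  by case/andP: (fn_bounds n x).
have intg n : \int[mu]_x g n x = (K * m)%:E.
  apply: integral_sub_Pop_bounded (fn_bounds n) (Pfn n) _ => // x.
  by have := g0 n x; rewrite lee_fin.
have fatou_g := fatou mu measurableT mg (fun n x _ => g0 n x).
rewrite (_ : (fun n => \int[mu]_x g n x) = fun=> (K * m)%:E) in fatou_g;
  last by apply/funext => n; exact: intg.
rewrite (cvg_limn_einf_sup (cvg_cst _)).1 in fatou_g.
apply: le_trans fatou_g; apply: ge0_le_integral => //.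
- by move=> x _; rewrite lee_fin.
- apply/measurable_EFinP/measurable_funD/measurable_cst/measurable_funB => //.
  exact: measurable_fine_Pop mf f0 Pf.
- exact: measurable_fun_limn_einf.
move=> x _; rewrite limn_einf_lim; apply: lime_ge; first exact: is_cvg_einfs.
exists (Num.bound (f x)) => // n /= le_bound_n.
apply: le_ereal_inf_tmp => _ [k /= le_nk <-].
have fx_le_k : (f x <= k%:R)%R.
  apply/ltW/(lt_le_trans (archi_boundP (f0 x))).
  by rewrite ler_nat (leq_trans le_bound_n le_nk).
rewrite /g lee_fin /fn (min_l fx_le_k).
by have := pfn_le k x; rewrite le_min => /andP[+ _]; lra.
Qed.
End invariant_measure.

Section drift.
Context {u : X -> R} {c : R}.
Hypotheses (mfu : measurable_fun setT u) (u_ge0 : forall x, (0 <= u x)%R)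
  (drift_lb : forall x, c%:E <= (u x)%:E - Pop Px Xn (EFin \o u) x).

Let Pu := Pop Px Xn (EFin \o u).

Lemma Pop_drift_fin_num x : Pu x \is a fin_num.
Proof.
rewrite ge0_fin_numE; last by apply: Pop_ge0 => y; rewrite lee_fin.
by move: (drift_lb x); rewrite -/Pu; case: (Pu x) => //= r _; exact: ltry.
Qed.

Let pu x := fine (Pu x).

Lemma Pop_driftE x : Pu x = (pu x)%:E.
Proof. by rewrite fineK// Pop_drift_fin_num. Qed.

Variable x0 : X.

Lemma Bu_fin_num : Bu Px Xn u \is a fin_num.
Proof.
rewrite /Bu fin_numD andbT fin_numElt; apply/andP; split.
  apply: (@lt_le_trans _ _ ((pu x0 - u x0)%:E)); first exact: ltNyr.
  by apply: ereal_sup_ubound; exists x0 => //; rewrite -/Pu Pop_driftE EFinB.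
apply: (@le_lt_trans _ _ ((- c)%:E)); last exact: ltry.
apply: ge_ereal_sup => _ [x _ <-].
by move: (drift_lb x); rewrite -/Pu Pop_driftE -EFinB !lee_fin; lra.
Qed.

Let b := fine (Bu Px Xn u).

Lemma Pop_sub_le_Bu x : (pu x - u x + 1 <= b)%R.
Proof.
rewrite -lee_fin /b fineK ?Bu_fin_num// EFinD; apply: leeD => //.
by apply: ereal_sup_ubound; exists x => //; rewrite -/Pu Pop_driftE EFinB.
Qed.

Lemma vuE x : vu Px Xn u x = (u x - pu x + b)%R.
Proof. by rewrite /vu /wu -/Pu Pop_driftE /b -[Bu _ _ _](fineK Bu_fin_num) -EFinB. Qed.

Lemma vu_ge1 x : (1 <= vu Px Xn u x)%R.
Proof. by rewrite vuE; have := Pop_sub_le_Bu x; lra. Qed.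

Lemma measurable_vu : measurable_fun setT (vu Px Xn u).
Proof.
rewrite (_ : vu Px Xn u = fun x => u x - pu x + b)%R; last first.
  by apply/funext => x; rewrite vuE.
apply/measurable_funD/measurable_cst/measurable_funB => //.
exact: measurable_fine_Pop mfu u_ge0 Pop_driftE.
Qed.

Lemma integral_vu_le (mu : {measure set X -> \bar R}) (m : R) :
  is_invariant Px Xn mu -> mu setT = m%:E ->
  \int[mu]_x (vu Px Xn u x)%:E <= (Num.max b 0%R * m)%:E.
Proof.
move=> mu_inv muE; pose K := Num.max b 0%R.
have bK : (b <= K)%R by rewrite le_max lexx.
apply: le_trans _ (integral_sub_Pop_le mu_inv muE _ _ K _ mfu u_ge0 Pop_driftE _).
- apply: ge0_le_integral => //.
  + by move=> x ?; rewrite lee_fin (le_trans ler01 (vu_ge1 x)).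
  + exact/measurable_EFinP/measurable_vu.
  + apply/measurable_EFinP/measurable_funD/measurable_cst/measurable_funB => //.
    exact: measurable_fine_Pop mfu u_ge0 Pop_driftE.
  + by move=> x ?; rewrite vuE lee_fin; lra.
- by rewrite le_max lexx orbT.
- by move=> x; have := Pop_sub_le_Bu x; lra.
Qed.

End drift.
End transition_operator.

Theorem mainTheorem14 (R : realType) (T : completePseudoMetricType R)
  (dO : measure_display) (Omega : measurableType dO)
  (Px : Borel T -> probability Omega R) (Xn : nat -> Omega -> Borel T)
  (theta : Omega -> Omega) (tau : Omega -> option nat)
  (u : Borel T -> R) (p : R) (mu : {measure set (Borel T) -> \bar R}) :
  polish_space T ->
  is_markov_family Px Xn ->
  is_shift Xn theta ->
  is_stopping_time Xn tau ->
  theta_compatible Px theta tau ->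
  (forall x, \int[Px x]_w tauE tau w < +oo)%E ->
  drift_function Px Xn tau u ->
  1 <= p ->
  is_invariant Px Xn mu ->
  (mu setT < +oo)%E -> mu setT != 0 ->
  (forall f : Borel T -> R, in_Ep Px Xn u p f -> f \in Lfun mu p%:E) /\
  exists C : R, 0 <= C /\
    forall f : Borel T -> R, in_Ep Px Xn u p f ->
      ('N[mu]_(p%:E)[EFin \o f] <= C%:E * Ep_norm Px Xn u p f)%E.
Proof.
move=> _ markov _ _ _ _ [mfu [u_ge1 [[c drift_lb] _]]] p_ge1 mu_inv mu_fin mu_neq0.
have X_neq0 : [set: Borel T] !=set0.
  by apply/set0P; apply: contra mu_neq0 => /eqP ->; rewrite measure0.
have [x0 _] := X_neq0.
have u_ge0 x : 0 <= u x by exact: le_trans ler01 (u_ge1 x).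
have muE : mu setT = (fine (mu setT))%:E by rewrite fineK// ge0_fin_numE.
(* The [+ 1] keeps [A] positive: with [A = 0] the bound [0 * +oo = 0] would be
   required for functions of infinite [E^p_u]-norm. *)
pose A := Num.max (fine (Bu Px Xn u)) 0 * fine (mu setT) + 1.
have A_gt0 : 0 < A by rewrite ltr_pwDr// mulr_ge0 ?le_max ?lexx ?orbT// fine_ge0.
have int_vu_le : (\int[mu]_x (vu Px Xn u x)%:E <= A%:E)%E.
  apply: le_trans (integral_vu_le markov mfu u_ge0 drift_lb x0 _ _ mu_inv muE) _.
  by rewrite lee_fin lerDl.
have p_gt0 : 0 < p by exact: lt_le_trans ltr01 p_ge1.
have mvu := measurable_vu markov mfu u_ge0 drift_lb x0.
have vu_gt0 x : 0 < vu Px Xn u x.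
  exact: lt_le_trans ltr01 (vu_ge1 u_ge0 drift_lb x0 x).
split=> [f|]; first exact: Fp_subset_Lfun mvu vu_gt0 int_vu_le p_gt0 f.
exists (A `^ p^-1); split=> [|f]; first exact: powR_ge0.
exact: Lnorm_le_Fp_norm mvu vu_gt0 int_vu_le p_gt0 f X_neq0 A_gt0.
Qed.
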